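(* Let $\mathcal{H}_A,\mathcal{H}_B$ be finite-dimensional Hilbert spaces, let $|\Psi\rangle,|\Phi\rangle\in\mathcal{H}_A\otimes\mathcal{H}_B$ be unit vectors, and let $\alpha,\beta\in\mathbb{C}$ be such that $|\Gamma\rangle=\alpha|\Psi\rangle+\beta|\Phi\rangle$ is a unit vector (no condition on $|\alpha|^2+|\beta|^2$ is imposed). Then for every $t\in(0,1)$, $$E(\Gamma)\ge\max\{L_1(t),L_2(t)\},$$ where $$L_1(t)=\frac{(1-t)|\beta|^2}{1-t(1-|\alpha|^2)}E(\Phi)-\frac{1-t}{t}E(\Psi)-\frac{1}{t}h_2(t),$$ $$L_2(t)=\frac{(1-t)|\alpha|^2}{1-t(1-|\beta|^2)}E(\Psi)-\frac{1-t}{t}E(\Phi)-\frac{1}{t}h_2(t).$$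
   Context: $S(\rho)=-\mathrm{Tr}(\rho\log\rho)$ is the von Neumann entropy (logarithm base 2). For a unit vector $|\chi\rangle\in\mathcal{H}_A\otimes\mathcal{H}_B$, its entanglement is $E(\chi)=S(\mathrm{Tr}_B|\chi\rangle\langle\chi|)$. $h_2(x)=-x\log x-(1-x)\log(1-x)$ is the binary entropy function. *)

From Stdlib Require Export Reals.
Open Scope R_scope.

Definition Cpx : Type := (R * R)%type.
Definition C0 : Cpx := (0, 0).
Definition C1 : Cpx := (1, 0).
Definition Cadd (z w : Cpx) : Cpx := (fst z + fst w, snd z + snd w).
Definition Cmul (z w : Cpx) : Cpx :=
  (fst z * fst w - snd z * snd w, fst z * snd w + snd z * fst w).
Definition Cconj (z : Cpx) : Cpx := (fst z, - snd z).
Definition RtoC (r : R) : Cpx := (r, 0).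
Definition Cnorm2 (z : Cpx) : R := fst z * fst z + snd z * snd z.

Fixpoint Rsum (n : nat) (f : nat -> R) : R :=
  match n with O => 0 | S k => Rsum k f + f k end.
Fixpoint Csum (n : nat) (f : nat -> Cpx) : Cpx :=
  match n with O => C0 | S k => Cadd (Csum k f) (f k) end.

(** Logarithm base 2 and the convention 0 log 0 = 0. *)
Definition log2 (x : R) : R := ln x / ln 2.
Definition xlog2x (x : R) : R := if Rle_dec x 0 then 0 else x * log2 x.
Definition h2 (x : R) : R := - xlog2x x - xlog2x (1 - x).

(** A vector of H_A ⊗ H_B with dim H_A = dA, dim H_B = dB is given by its
    coefficients x i j (i < dA, j < dB) in the product basis. *)
Definition bivec : Type := nat -> nat -> Cpx.

Definition is_unit_vec (dA dB : nat) (x : bivec) : Prop :=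
  Rsum dA (fun i => Rsum dB (fun j => Cnorm2 (x i j))) = 1.

(** Reduced density matrix Tr_B |x><x| : entries (i,j), i,j < dA. *)
Definition red_dm (dB : nat) (x : bivec) : nat -> nat -> Cpx :=
  fun i j => Csum dB (fun k => Cmul (x i k) (Cconj (x j k))).

(** lam (k < d) is the list of eigenvalues of the d x d matrix rho (with
    multiplicity): rho = sum_k lam_k |u_k><u_k| for an orthonormal basis
    (u_k)_{k<d}, u_k having coordinates u k i. *)
Definition is_spectrum (d : nat) (rho : nat -> nat -> Cpx) (lam : nat -> R) : Prop :=
  exists u : nat -> nat -> Cpx,
    (forall k l, (k < d)%nat -> (l < d)%nat ->
       Csum d (fun i => Cmul (u k i) (Cconj (u l i))) =
       (if Nat.eqb k l then C1 else C0)) /\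
    (forall i j, (i < d)%nat -> (j < d)%nat ->
       rho i j = Csum d (fun k => Cmul (RtoC (lam k)) (Cmul (u k i) (Cconj (u k j))))).

(** Von Neumann entropy -Tr(rho log rho) computed from the spectrum lam. *)
Definition vN_of_spectrum (d : nat) (lam : nat -> R) : R :=
  - Rsum d (fun k => xlog2x (lam k)).

(** E(x) = e : e is the von Neumann entropy of Tr_B |x><x|. (The spectrum is
    unique up to permutation and always exists, so this relation is a
    total function.) *)
Definition Ent (dA dB : nat) (x : bivec) (e : R) : Prop :=
  exists lam, is_spectrum dA (red_dm dB x) lam /\ e = vN_of_spectrum dA lam.

Definition lincomb (a b : Cpx) (x y : bivec) : bivec :=
  fun i j => Cadd (Cmul a (x i j)) (Cmul b (y i j)).

From Pilot Require Import Defs.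
From Stdlib Require Import Reals Lra Lia Psatz Rtopology ClassicalEpsilon Classical
  FunctionalExtensionality.
(* Re-import so that [C0], [C1] refer to the complex constants, not to Stdlib homonyms. *)
Import Pilot.Defs.
Open Scope R_scope.

(** Write rho_x = Tr_B |x><x| and E(x) = S(rho_x); fix t in (0,1) and consider the mixture
    sigma = t rho_Gamma + (1 - t) rho_Phi. Its entropy is squeezed between two estimates.
    - Upper: sigma is the ensemble of the eigenvectors of rho_Gamma and rho_Phi with weights
      t lam_Gamma and (1 - t) lam_Phi, and the entropy of an ensemble operator never exceeds
      the Shannon entropy of its weights (the eigenvalues of sigma are images of the weights
      under a doubly substochastic matrix; conclude by Jensen). This gives
      S(sigma) <= t E(Gamma) + (1 - t) E(Phi) + h2(t).
    - Lower: an identity for 2x2 Hermitian forms, applied column by column, gives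
      sigma = q rho_Psi + |w><w| / D with D = 1 - t (1 - |beta|^2), q = t (1 - t) |alpha|^2 / D;
      adding a positive remainder of trace 1 - q to q rho_Psi yields entropy at least
      q S(rho_Psi), by concavity of eta(x) = - x log2 x.
    Combining, q E(Psi) <= t E(Gamma) + (1 - t) E(Phi) + h2(t), which rearranges to L2(t);
    L1(t) is L2(t) with the roles of Psi and Phi exchanged.

    The spectrum of sigma is not given, so the file proves the spectral theorem for ensemble
    operators (eigenvectors as successive maximisers of the quadratic form, which exist by
    Bolzano--Weierstrass). *)

Lemma Rsum_ext n f g : (forall i, (i < n)%nat -> f i = g i) -> Rsum n f = Rsum n g.
Proof. induction n; simpl; intros; auto. rewrite IHn, H; auto. Qed.

Lemma Rsum_plus n f g : Rsum n (fun i => f i + g i) = Rsum n f + Rsum n g.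
Proof. induction n; simpl; [ring | rewrite IHn; ring]. Qed.

Lemma Rsum_scal_l n c f : Rsum n (fun i => c * f i) = c * Rsum n f.
Proof. induction n; simpl; [ring | rewrite IHn; ring]. Qed.

Lemma Rsum_scal_r n c f : Rsum n (fun i => f i * c) = Rsum n f * c.
Proof. induction n; simpl; [ring | rewrite IHn; ring]. Qed.

Lemma Rsum_opp n f : Rsum n (fun i => - f i) = - Rsum n f.
Proof. induction n; simpl; [ring | rewrite IHn; ring]. Qed.

Lemma Rsum_const n c : Rsum n (fun _ => c) = INR n * c.
Proof. induction n; simpl; [ring |]. rewrite IHn; destruct n; simpl; ring. Qed.

Lemma Rsum_zero n f : (forall i, (i < n)%nat -> f i = 0) -> Rsum n f = 0.
Proof. intros H. rewrite (Rsum_ext n f (fun _ => 0)), Rsum_const; auto; ring. Qed.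

Lemma Rsum_le n f g : (forall i, (i < n)%nat -> f i <= g i) -> Rsum n f <= Rsum n g.
Proof.
  induction n; simpl; intros H; [lra |].
  assert (f n <= g n) by auto. assert (Rsum n f <= Rsum n g) by auto. lra.
Qed.

Lemma Rsum_nonneg n f : (forall i, (i < n)%nat -> 0 <= f i) -> 0 <= Rsum n f.
Proof. intros. replace 0 with (Rsum n (fun _ => 0)) by (rewrite Rsum_const; ring). apply Rsum_le; auto. Qed.

Lemma Rsum_comm n m (f : nat -> nat -> R) :
  Rsum n (fun i => Rsum m (fun j => f i j)) = Rsum m (fun j => Rsum n (fun i => f i j)).
Proof.
  induction n; simpl.
  - rewrite Rsum_zero; auto.
  - rewrite IHn, <- Rsum_plus; auto.
Qed.

Lemma Rsum_app n m f : Rsum (n + m) f = Rsum n f + Rsum m (fun i => f (n + i)%nat).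
Proof.
  induction m; simpl.
  - rewrite Nat.add_0_r; ring.
  - rewrite Nat.add_succ_r; simpl; rewrite IHm; ring.
Qed.

Lemma Rsum_term_le n f k :
  (forall i, (i < n)%nat -> 0 <= f i) -> (k < n)%nat -> f k <= Rsum n f.
Proof.
  induction n; simpl; intros Hf Hk; [lia |].
  destruct (Nat.eq_dec k n) as [-> | Hkn].
  - assert (0 <= Rsum n f) by (apply Rsum_nonneg; auto). lra.
  - assert (f k <= Rsum n f) by (apply IHn; auto; lia). assert (0 <= f n) by auto. lra.
Qed.

Lemma Rsum_nonneg_eq0 n f k :
  (forall i, (i < n)%nat -> 0 <= f i) -> Rsum n f = 0 -> (k < n)%nat -> f k = 0.
Proof.
  intros Hf Hs Hk. pose proof (Rsum_term_le n f k Hf Hk). pose proof (Hf k Hk). lra.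
Qed.

Lemma Rsum_delta n k a :
  (k < n)%nat -> Rsum n (fun j => if Nat.eqb j k then a j else 0) = a k.
Proof.
  induction n; simpl; intros Hk; [lia |].
  destruct (Nat.eq_dec k n) as [-> | Hkn].
  - rewrite Nat.eqb_refl, Rsum_zero; [ring |].
    intros i Hi. destruct (Nat.eqb_spec i n); [lia | auto].
  - destruct (Nat.eqb_spec n k); [lia |]. rewrite IHn; [ring | lia].
Qed.

Lemma Ceq (z w : Cpx) : fst z = fst w -> snd z = snd w -> z = w.
Proof. destruct z, w; simpl; intros; subst; reflexivity. Qed.

Definition Copp (z : Cpx) : Cpx := (- fst z, - snd z).
Definition Csub (z w : Cpx) : Cpx := Cadd z (Copp w).

Lemma Cring_theory : ring_theory C0 C1 Cadd Cmul Csub Copp (@eq Cpx).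
Proof.
  constructor; intros; apply Ceq; unfold Cadd, Cmul, Csub, Copp, C0, C1; simpl; ring.
Qed.
Add Ring Cring : Cring_theory.

Ltac cring := apply Ceq; unfold Cadd, Cmul, Csub, Copp, C0, C1, Cconj, RtoC; simpl; ring.

Lemma Cconj_mul a b : Cconj (Cmul a b) = Cmul (Cconj a) (Cconj b).
Proof. cring. Qed.

Lemma Cconj_add a b : Cconj (Cadd a b) = Cadd (Cconj a) (Cconj b).
Proof. cring. Qed.

Lemma Cnorm2_nonneg z : 0 <= Cnorm2 z.
Proof. unfold Cnorm2; nra. Qed.

Lemma Cnorm2_eq0 z : Cnorm2 z = 0 -> z = C0.
Proof. unfold Cnorm2; intros; apply Ceq; unfold C0; simpl; nra. Qed.

Lemma Cnorm2_C0 : Cnorm2 C0 = 0.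
Proof. unfold Cnorm2, C0; simpl; ring. Qed.

Lemma Cnorm2_conj z : Cnorm2 (Cconj z) = Cnorm2 z.
Proof. unfold Cnorm2, Cconj; simpl; ring. Qed.

Lemma Cnorm2_mul a b : Cnorm2 (Cmul a b) = Cnorm2 a * Cnorm2 b.
Proof. unfold Cnorm2, Cmul; simpl; ring. Qed.

Lemma Cnorm2_RtoC c : Cnorm2 (RtoC c) = c * c.
Proof. unfold Cnorm2, RtoC; simpl; ring. Qed.

Lemma weighted_sum_zero K (nu : nat -> R) (c : nat -> Cpx) j :
  (forall j, (j < K)%nat -> 0 <= nu j) ->
  Rsum K (fun j => nu j * Cnorm2 (c j)) = 0 -> (j < K)%nat -> 0 < nu j -> c j = C0.
Proof.
  intros Hnu Hs Hj Hpos. apply Cnorm2_eq0.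
  assert (Hz : nu j * Cnorm2 (c j) = 0).
  { apply (Rsum_nonneg_eq0 K (fun j => nu j * Cnorm2 (c j))); auto.
    intros; apply Rmult_le_pos; auto; apply Cnorm2_nonneg. }
  destruct (Rmult_integral _ _ Hz); [lra | auto].
Qed.

Lemma Csum_fst n f : fst (Csum n f) = Rsum n (fun i => fst (f i)).
Proof. induction n; simpl; auto. rewrite IHn; auto. Qed.

Lemma Csum_snd n f : snd (Csum n f) = Rsum n (fun i => snd (f i)).
Proof. induction n; simpl; auto. rewrite IHn; auto. Qed.

Lemma Csum_ext n f g : (forall i, (i < n)%nat -> f i = g i) -> Csum n f = Csum n g.
Proof. induction n; simpl; intros; auto. rewrite IHn, H; auto. Qed.

Lemma Csum_plus n f g : Csum n (fun i => Cadd (f i) (g i)) = Cadd (Csum n f) (Csum n g).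
Proof. induction n; simpl; [cring | rewrite IHn; ring]. Qed.

Lemma Csum_scal_l n c f : Csum n (fun i => Cmul c (f i)) = Cmul c (Csum n f).
Proof. induction n; simpl; [cring | rewrite IHn; ring]. Qed.

Lemma Csum_scal_r n c f : Csum n (fun i => Cmul (f i) c) = Cmul (Csum n f) c.
Proof. induction n; simpl; [cring | rewrite IHn; ring]. Qed.

Lemma Csum_zero n : Csum n (fun _ => C0) = C0.
Proof. induction n; simpl; auto. rewrite IHn; ring. Qed.

Lemma Csum_comm n m (f : nat -> nat -> Cpx) :
  Csum n (fun i => Csum m (fun j => f i j)) = Csum m (fun j => Csum n (fun i => f i j)).
Proof. induction n; simpl; [rewrite Csum_zero; auto | rewrite IHn, <- Csum_plus; auto]. Qed.

Lemma Csum_conj n f : Cconj (Csum n f) = Csum n (fun i => Cconj (f i)).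
Proof. induction n; simpl; [cring | rewrite <- IHn; cring]. Qed.

Lemma Csum_RtoC n f : Csum n (fun i => RtoC (f i)) = RtoC (Rsum n f).
Proof. induction n; simpl; auto. rewrite IHn; cring. Qed.

Lemma Csum_delta n k a :
  (k < n)%nat -> Csum n (fun j => if Nat.eqb j k then a j else C0) = a k.
Proof.
  intros Hk. apply Ceq; rewrite ?Csum_fst, ?Csum_snd.
  - rewrite <- (Rsum_delta n k (fun j => fst (a j))); auto.
    apply Rsum_ext; intros; destruct (Nat.eqb i k); auto.
  - rewrite <- (Rsum_delta n k (fun j => snd (a j))); auto.
    apply Rsum_ext; intros; destruct (Nat.eqb i k); auto.
Qed.

(** * Vectors of C^n

    A vector is a coefficient function [nat -> Cpx], of which only the first [n]
    coordinates matter. [dot n x y] is the inner product, antilinear in [x]. *)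

Definition cvec : Type := nat -> Cpx.

Section Vectors.

Variable n : nat.

Definition dot (x y : cvec) : Cpx := Csum n (fun i => Cmul (Cconj (x i)) (y i)).
Definition nrm2 (x : cvec) : R := Rsum n (fun i => Cnorm2 (x i)).

Definition orthonormal (M : nat) (e : nat -> cvec) : Prop :=
  forall k l, (k < M)%nat -> (l < M)%nat -> dot (e k) (e l) = if Nat.eqb k l then C1 else C0.

Definition perp (M : nat) (e : nat -> cvec) (v : cvec) : Prop :=
  forall m, (m < M)%nat -> dot (e m) v = C0.

Definition lin (M : nat) (c : nat -> Cpx) (e : nat -> cvec) : cvec :=
  fun i => Csum M (fun k => Cmul (c k) (e k i)).
Definition vcomb (v : cvec) (c : Cpx) (w : cvec) : cvec := fun i => Cadd (v i) (Cmul c (w i)).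
Definition vscal (c : Cpx) (w : cvec) : cvec := fun i => Cmul c (w i).
Definition delta_vec (k : nat) : cvec := fun i => if Nat.eqb i k then C1 else C0.

Definition resid (M : nat) (e : nat -> cvec) (x : cvec) : cvec :=
  fun i => Csub (x i) (lin M (fun k => dot (e k) x) e i).

Lemma dot_ext x x' y y' :
  (forall i, (i < n)%nat -> x i = x' i) -> (forall i, (i < n)%nat -> y i = y' i) ->
  dot x y = dot x' y'.
Proof. intros Hx Hy; unfold dot; apply Csum_ext; intros; rewrite Hx, Hy; auto. Qed.

Lemma dot_conj x y : dot y x = Cconj (dot x y).
Proof. unfold dot; rewrite Csum_conj; apply Csum_ext; intros; cring. Qed.

Lemma Cnorm2_dot_sym x y : Cnorm2 (dot x y) = Cnorm2 (dot y x).
Proof. rewrite (dot_conj x y), Cnorm2_conj; auto. Qed.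

Lemma dot_self x : dot x x = RtoC (nrm2 x).
Proof.
  unfold dot, nrm2; apply Ceq; rewrite ?Csum_fst, ?Csum_snd; simpl.
  - apply Rsum_ext; intros; unfold Cnorm2, Cmul, Cconj; simpl; ring.
  - apply Rsum_zero; intros; unfold Cmul, Cconj; simpl; ring.
Qed.

Lemma nrm2_nonneg x : 0 <= nrm2 x.
Proof. apply Rsum_nonneg; intros; apply Cnorm2_nonneg. Qed.

Lemma nrm2_zero x i : nrm2 x = 0 -> (i < n)%nat -> x i = C0.
Proof.
  intros H Hi. apply Cnorm2_eq0.
  apply (Rsum_nonneg_eq0 n (fun i => Cnorm2 (x i))); auto; intros; apply Cnorm2_nonneg.
Qed.

Lemma dot_zero_r x v : (forall i, (i < n)%nat -> v i = C0) -> dot x v = C0.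
Proof.
  intros Hv. unfold dot. rewrite (Csum_ext n _ (fun _ => C0)); [apply Csum_zero |].
  intros; rewrite Hv; auto; cring.
Qed.

Lemma dot_add_r x y z : dot x (fun i => Cadd (y i) (z i)) = Cadd (dot x y) (dot x z).
Proof. unfold dot; rewrite <- Csum_plus; apply Csum_ext; intros; ring. Qed.

Lemma dot_add_l x y z : dot (fun i => Cadd (y i) (z i)) x = Cadd (dot y x) (dot z x).
Proof. unfold dot; rewrite <- Csum_plus; apply Csum_ext; intros; rewrite Cconj_add; ring. Qed.

Lemma dot_scal_r x c y : dot x (vscal c y) = Cmul c (dot x y).
Proof. unfold dot, vscal; rewrite <- Csum_scal_l; apply Csum_ext; intros; ring. Qed.

Lemma dot_scal_l x c y : dot (vscal c y) x = Cmul (Cconj c) (dot y x).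
Proof. unfold dot, vscal; rewrite <- Csum_scal_l; apply Csum_ext; intros; rewrite Cconj_mul; ring. Qed.

Lemma dot_vcomb x v c w : dot x (vcomb v c w) = Cadd (dot x v) (Cmul c (dot x w)).
Proof. unfold vcomb; rewrite dot_add_r; fold (vscal c w); rewrite dot_scal_r; auto. Qed.

Lemma dot_lin_r M x c e : dot x (lin M c e) = Csum M (fun k => Cmul (c k) (dot x (e k))).
Proof.
  unfold dot, lin.
  rewrite (Csum_ext n _ (fun i => Csum M (fun k => Cmul (c k) (Cmul (Cconj (x i)) (e k i))))).
  - rewrite Csum_comm; apply Csum_ext; intros; rewrite Csum_scal_l; auto.
  - intros; rewrite <- Csum_scal_l; apply Csum_ext; intros; ring.
Qed.

Lemma dot_lin_l M y c e : dot (lin M c e) y = Csum M (fun k => Cmul (Cconj (c k)) (dot (e k) y)).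
Proof.
  rewrite dot_conj, dot_lin_r, Csum_conj; apply Csum_ext; intros.
  rewrite Cconj_mul, <- dot_conj; auto.
Qed.

Lemma dot_delta y k : (k < n)%nat -> dot y (delta_vec k) = Cconj (y k).
Proof.
  intros Hk. unfold dot, delta_vec.
  rewrite <- (Csum_delta n k (fun j => Cconj (y j))); auto.
  apply Csum_ext; intros; destruct (Nat.eqb i k); cring.
Qed.

Section Orthonormal.

Variables (M : nat) (e : nat -> cvec).
Hypothesis e_on : orthonormal M e.

Lemma on_unit m : (m < M)%nat -> nrm2 (e m) = 1.
Proof.
  intros Hm. pose proof (e_on m m Hm Hm) as H. rewrite Nat.eqb_refl, dot_self in H.
  apply (f_equal fst) in H. exact H.
Qed.

Lemma dot_on_lin c j : (j < M)%nat -> dot (e j) (lin M c e) = c j.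
Proof.
  intros Hj. rewrite dot_lin_r, <- (Csum_delta M j c); auto.
  apply Csum_ext; intros i Hi. rewrite e_on; auto.
  destruct (Nat.eqb_spec j i), (Nat.eqb_spec i j); subst; try lia; cring.
Qed.

Lemma sum_on_basis (f : nat -> R) m : (m < M)%nat ->
  Rsum M (fun k => f k * Cnorm2 (dot (e k) (e m))) = f m.
Proof.
  intros Hm. rewrite <- (Rsum_delta M m f); auto. apply Rsum_ext; intros.
  rewrite e_on; auto. destruct (Nat.eqb_spec i m); unfold Cnorm2, C1, C0; simpl; ring.
Qed.

Lemma resid_perp x : perp M e (resid M e x).
Proof.
  intros j Hj. unfold resid, Csub, Copp.
  rewrite (dot_ext (e j) (e j) _ (vcomb x (Copp C1) (lin M (fun k => dot (e k) x) e)));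
    [| auto | intros; unfold vcomb; cring].
  rewrite dot_vcomb, dot_on_lin; auto. cring.
Qed.

Lemma pythag x :
  nrm2 x = Rsum M (fun k => Cnorm2 (dot (e k) x)) + nrm2 (resid M e x).
Proof.
  set (c := fun k => dot (e k) x). set (w := resid M e x).
  assert (Hw : perp M e w) by apply resid_perp.
  assert (Hlw : dot (lin M c e) w = C0).
  { rewrite dot_lin_l, (Csum_ext M _ (fun _ => C0)); [apply Csum_zero |].
    intros; rewrite Hw; auto; ring. }
  assert (Hwl : dot w (lin M c e) = C0) by (rewrite dot_conj, Hlw; cring).
  assert (Hll : dot (lin M c e) (lin M c e) = RtoC (Rsum M (fun k => Cnorm2 (c k)))).
  { rewrite dot_lin_l. apply Ceq; rewrite ?Csum_fst, ?Csum_snd; simpl.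
    - apply Rsum_ext; intros; rewrite dot_on_lin; auto. unfold Cnorm2, Cmul, Cconj; simpl; ring.
    - apply Rsum_zero; intros; rewrite dot_on_lin; auto. unfold Cmul, Cconj; simpl; ring. }
  assert (Hx : dot x x = dot (fun i => Cadd (lin M c e i) (w i)) (fun i => Cadd (lin M c e i) (w i))).
  { apply dot_ext; intros; unfold w, resid, c; ring. }
  rewrite !dot_add_l, !dot_add_r, Hlw, Hwl, Hll, !dot_self in Hx.
  apply (f_equal fst) in Hx. unfold Cadd, C0, RtoC in Hx; simpl in Hx.
  rewrite Hx; unfold c; ring.
Qed.

Lemma bessel x : Rsum M (fun k => Cnorm2 (dot (e k) x)) <= nrm2 x.
Proof. rewrite (pythag x). pose proof (nrm2_nonneg (resid M e x)). lra. Qed.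

Lemma in_span x : dot x (resid M e x) = C0 ->
  Rsum M (fun k => Cnorm2 (dot (e k) x)) = nrm2 x.
Proof.
  intros H. set (w := resid M e x).
  assert (Hww : dot w w = C0).
  { rewrite <- H. change (dot w w = dot x w). symmetry.
    rewrite (dot_ext x (fun i => Cadd (lin M (fun k => dot (e k) x) e i) (w i)) w w);
      [| intros; unfold w, resid; ring | auto].
    rewrite dot_add_l, dot_lin_l, (Csum_ext M _ (fun _ => C0)), Csum_zero; [ring |].
    intros; unfold w; rewrite resid_perp; auto; ring. }
  rewrite dot_self in Hww. apply (f_equal fst) in Hww. simpl in Hww.
  rewrite (pythag x). fold w. rewrite Hww. ring.
Qed.

End Orthonormal.

Lemma nrm2_scal c v : nrm2 (vscal c v) = Cnorm2 c * nrm2 v.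
Proof. unfold nrm2, vscal; rewrite <- Rsum_scal_l; apply Rsum_ext; intros; apply Cnorm2_mul. Qed.

Lemma normalize v : 0 < nrm2 v -> nrm2 (vscal (RtoC (/ sqrt (nrm2 v))) v) = 1.
Proof.
  intros H. rewrite nrm2_scal, Cnorm2_RtoC. pose proof (sqrt_lt_R0 _ H).
  rewrite <- Rinv_mult, sqrt_sqrt; [field |]; lra.
Qed.

(** Cauchy--Schwarz, as Bessel's inequality for the normalised vector [x]. *)
Lemma cauchy_schwarz x y : Cnorm2 (dot x y) <= nrm2 x * nrm2 y.
Proof.
  destruct (Req_dec (nrm2 x) 0) as [H0 | H0].
  - rewrite H0, dot_conj, dot_zero_r, Cnorm2_conj, Cnorm2_C0; [lra |].
    intros; apply nrm2_zero; auto.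
  - assert (Hp : 0 < nrm2 x) by (pose proof (nrm2_nonneg x); lra).
    set (s := sqrt (nrm2 x)). assert (Hs : 0 < s) by apply sqrt_lt_R0, Hp.
    assert (Hss : s * s = nrm2 x) by apply sqrt_sqrt, nrm2_nonneg.
    assert (Ho : orthonormal 1 (fun _ => vscal (RtoC (/ s)) x)).
    { intros k l Hk Hl. replace k with O by lia. replace l with O by lia.
      rewrite dot_self; unfold s; rewrite normalize; auto. }
    pose proof (bessel 1 _ Ho y) as Hb. simpl in Hb.
    rewrite dot_scal_l, Cnorm2_mul, Cnorm2_conj, Cnorm2_RtoC in Hb.
    rewrite <- Hss. apply (Rmult_le_compat_l (s * s)) in Hb; [| nra].
    replace (s * s * (0 + / s * / s * Cnorm2 (dot x y))) with (Cnorm2 (dot x y)) in Hb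
      by (field; lra).
    lra.
Qed.

(** An orthonormal family in C^n has at most [n] members: sum Bessel's inequality
    over the standard basis. *)
Lemma orth_dim M e : orthonormal M e -> (M <= n)%nat.
Proof.
  intros Ho. apply INR_le.
  replace (INR M) with (Rsum M (fun m => nrm2 (e m))).
  2: { rewrite <- (Rmult_1_r (INR M)), <- Rsum_const. apply Rsum_ext; intros; apply (on_unit M e Ho); auto. }
  replace (INR n) with (Rsum n (fun _ => 1)) by (rewrite Rsum_const; ring).
  unfold nrm2. rewrite Rsum_comm. apply Rsum_le; intros i Hi.
  assert (Hd : nrm2 (delta_vec i) = 1).
  { unfold nrm2, delta_vec. rewrite <- (Rsum_delta n i (fun _ => 1)); auto.
    apply Rsum_ext; intros; destruct (Nat.eqb i0 i); unfold Cnorm2, C1, C0; simpl; ring. }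
  rewrite <- Hd. eapply Rle_trans; [| apply (bessel M e Ho)].
  right. apply Rsum_ext; intros. rewrite dot_delta, Cnorm2_conj; auto.
Qed.

Definition ext (M : nat) (e : nat -> cvec) (v : cvec) : nat -> cvec :=
  fun m => if Nat.eqb m M then v else e m.

Lemma orth_extend M e v :
  orthonormal M e -> perp M e v -> nrm2 v = 1 -> orthonormal (S M) (ext M e v).
Proof.
  intros Ho Hp Hn k l Hk Hl. unfold ext.
  destruct (Nat.eqb_spec k M), (Nat.eqb_spec l M); subst.
  - rewrite Nat.eqb_refl, dot_self, Hn; auto.
  - rewrite dot_conj, Hp by lia. destruct (Nat.eqb_spec M l); [lia | cring].
  - rewrite Hp by lia. destruct (Nat.eqb_spec k M); [lia | auto].
  - apply Ho; lia.
Qed.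

End Vectors.

(** * Sequential compactness of the unit ball of C^n *)

Definition incr (phi : nat -> nat) : Prop := forall p, (phi p < phi (S p))%nat.

Lemma incr_ge phi : incr phi -> forall p, (p <= phi p)%nat.
Proof. intros H p; induction p; [lia |]. specialize (H p); lia. Qed.

Lemma incr_comp phi psi : incr phi -> incr psi -> incr (fun p => phi (psi p)).
Proof.
  intros H1 H2 p.
  assert (Hmono : forall a b, (a < b)%nat -> (phi a < phi b)%nat).
  { intros a b Hab; induction Hab; [apply H1 | specialize (H1 m); lia]. }
  apply Hmono, H2.
Qed.

Lemma cv_sub u l phi : incr phi -> Un_cv u l -> Un_cv (fun p => u (phi p)) l.
Proof.
  intros Hi Hc eps He. destruct (Hc eps He) as [N HN]. exists N; intros p Hp.
  apply HN. pose proof (incr_ge phi Hi p). lia.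
Qed.

Lemma inv_succ_small eps : 0 < eps -> exists N, forall p, (N <= p)%nat -> / INR (S p) < eps.
Proof.
  intros He. destruct (archimed_cor1 eps He) as [N [HN HN0]]. exists N; intros p Hp.
  eapply Rle_lt_trans; [| exact HN]. apply Rinv_le_contravar; [apply lt_0_INR; lia |].
  apply le_INR; lia.
Qed.

Lemma extract_real (u : nat -> R) : (forall p, -1 <= u p <= 1) ->
  exists phi l, incr phi /\ Un_cv (fun p => u (phi p)) l.
Proof.
  intros Hb.
  destruct (Bolzano_Weierstrass u (fun x => -1 <= x <= 1) (compact_P3 (-1) 1) Hb) as [l Hl].
  assert (Hclose : forall N k : nat, exists p, (N <= p)%nat /\ Rabs (u p - l) < / INR (S k)).
  { intros N k. assert (Hpos : 0 < / INR (S k)) by (apply Rinv_0_lt_compat, lt_0_INR; lia).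
    destruct (Hl (disc l (mkposreal _ Hpos)) N) as [p Hp]; [| exists p; exact Hp].
    exists (mkposreal _ Hpos). intros y Hy; exact Hy. }
  pose (g := fun N k => proj1_sig (constructive_indefinite_description _ (Hclose N k))).
  assert (Hg : forall N k, (N <= g N k)%nat /\ Rabs (u (g N k) - l) < / INR (S k)).
  { intros; unfold g; destruct (constructive_indefinite_description _ _); auto. }
  pose (phi := fix f (k : nat) : nat := match k with O => g O O | S k' => g (S (f k')) (S k') end).
  exists phi, l. split.
  - intros p. simpl. destruct (Hg (S (phi p)) (S p)). lia.
  - intros eps He. destruct (inv_succ_small eps He) as [N HN]. exists N; intros p Hp.
    unfold Rdist. eapply Rlt_trans; [| apply (HN p Hp)].
    destruct p; [apply (Hg O O) | apply (Hg _ (S p))].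
Qed.

Definition Ccv (z : nat -> Cpx) (l : Cpx) : Prop :=
  Un_cv (fun p => fst (z p)) (fst l) /\ Un_cv (fun p => snd (z p)) (snd l).

Definition vec_cv (n : nat) (s : nat -> cvec) (l : cvec) : Prop :=
  forall i, (i < n)%nat -> Ccv (fun p => s p i) (l i).

Lemma extract_vec n (s : nat -> cvec) :
  (forall p i, (i < n)%nat -> Cnorm2 (s p i) <= 1) ->
  exists phi l, incr phi /\ vec_cv n (fun p => s (phi p)) l.
Proof.
  induction n as [| n IH]; intros Hb.
  - exists (fun p => p), (fun _ => C0). split; [intro; simpl; lia | intros i Hi; lia].
  - destruct IH as [phi [l [Hi Hl]]]; [intros; apply Hb; lia |].
    assert (Hc : forall p, -1 <= fst (s p n) <= 1 /\ -1 <= snd (s p n) <= 1).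
    { intros p. specialize (Hb p n (Nat.lt_succ_diag_r n)). unfold Cnorm2 in Hb. split; split; nra. }
    destruct (extract_real (fun p => fst (s (phi p) n))) as [psi1 [l1 [Hi1 Hl1]]];
      [intros; apply Hc |].
    destruct (extract_real (fun p => snd (s (phi (psi1 p)) n))) as [psi2 [l2 [Hi2 Hl2]]];
      [intros; apply Hc |].
    exists (fun p => phi (psi1 (psi2 p))), (fun i => if Nat.eqb i n then (l1, l2) else l i).
    split; [apply incr_comp; auto; apply incr_comp; auto |].
    intros i Hin. destruct (Nat.eqb_spec i n) as [-> | Hn].
    + split; [apply (cv_sub (fun p => fst (s (phi (psi1 p)) n))); auto | apply Hl2].
    + assert (Hii : (i < n)%nat) by lia. destruct (Hl i Hii) as [A B].
      assert (Hps : incr (fun p => psi1 (psi2 p))) by (apply incr_comp; auto).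
      split; [apply (cv_sub (fun p => fst (s (phi p) i)) _ _ Hps A)
             | apply (cv_sub (fun p => snd (s (phi p) i)) _ _ Hps B)].
Qed.

Lemma cv_const c : Un_cv (fun _ => c) c.
Proof. intros eps He; exists O; intros; unfold Rdist; rewrite Rminus_diag, Rabs_R0; auto. Qed.

Lemma cv_Rsum n (f : nat -> nat -> R) (g : nat -> R) :
  (forall i, (i < n)%nat -> Un_cv (fun p => f p i) (g i)) ->
  Un_cv (fun p => Rsum n (f p)) (Rsum n g).
Proof. induction n; simpl; intros; [apply cv_const | apply CV_plus; auto]. Qed.

Lemma Ccv_dot n x s l : vec_cv n s l -> Ccv (fun p => dot n x (s p)) (dot n x l).
Proof.
  intros Hl. unfold Ccv, dot. rewrite Csum_fst, Csum_snd. split.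
  - apply (Un_cv_ext (fun p => Rsum n (fun i => fst (Cmul (Cconj (x i)) (s p i)))));
      [intros; rewrite Csum_fst; auto |].
    apply cv_Rsum; intros i Hi; destruct (Hl i Hi) as [H1 H2]; unfold Cmul, Cconj; simpl.
    apply CV_minus; apply CV_mult; auto using cv_const.
  - apply (Un_cv_ext (fun p => Rsum n (fun i => snd (Cmul (Cconj (x i)) (s p i)))));
      [intros; rewrite Csum_snd; auto |].
    apply cv_Rsum; intros i Hi; destruct (Hl i Hi) as [H1 H2]; unfold Cmul, Cconj; simpl.
    apply CV_plus; apply CV_mult; auto using cv_const.
Qed.

Lemma cv_Cnorm2 z l : Ccv z l -> Un_cv (fun p => Cnorm2 (z p)) (Cnorm2 l).
Proof. intros [H1 H2]. unfold Cnorm2. apply CV_plus; apply CV_mult; auto. Qed.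

Lemma Ccv_const_eq z c l : (forall p, z p = c) -> Ccv z l -> l = c.
Proof.
  intros Hz [H1 H2]. apply Ceq; eapply UL_sequence; eauto;
    eapply Un_cv_ext; try apply cv_const; intros; simpl; rewrite Hz; auto.
Qed.

(** * The operator of a weighted ensemble and its spectral decomposition

    For weights [r a >= 0] and vectors [psi a] (a < N), the positive operator
    sigma = sum_a r_a |psi_a><psi_a| acts by [op]; [quad v] is <v, sigma v>.
    We prove the spectral theorem for sigma in the quadratic-form sense:
    there is an orthonormal family (e_m) and weights lam_m >= 0 with
    <v, sigma v> = sum_m lam_m |<e_m, v>|^2 for all v. The eigenvectors are
    found one at a time by maximising <v, sigma v> on the unit sphere of the
    orthogonal complement of those already found. *)

Lemma real_quad_zero X Y : (forall eps, 2 * eps * X + eps * eps * Y <= 0) -> X = 0.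
Proof.
  intros H. assert (Hp : 0 < Rabs Y + 1) by (pose proof (Rabs_pos Y); lra).
  set (eps := X / (Rabs Y + 1)). specialize (H eps).
  assert (He : eps * (Rabs Y + 1) = X) by (unfold eps; field; lra).
  assert (0 <= Rabs Y) by apply Rabs_pos. assert (- Y <= Rabs Y) by (rewrite <- Rabs_Ropp; apply RRle_abs).
  rewrite <- He in H.
  assert (Hsq : eps * eps * (2 * (Rabs Y + 1) + Y) <= 0) by (ring_simplify; ring_simplify in H; lra).
  assert (Heps : eps * eps = 0) by (assert (0 <= eps * eps) by nra; nra).
  assert (Hz : eps = 0) by nra. rewrite <- He, Hz; ring.
Qed.

Section Ensemble.

Variables (n N : nat) (r : nat -> R) (psi : nat -> cvec).
Hypothesis r_nonneg : forall a, (a < N)%nat -> 0 <= r a.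

Definition op (v : cvec) : cvec := lin N (fun a => Cmul (RtoC (r a)) (dot n (psi a) v)) psi.
Definition quad (v : cvec) : R := Rsum N (fun a => r a * Cnorm2 (dot n (psi a) v)).

Lemma form_expand w v :
  dot n w (op v) = Csum N (fun a => Cmul (RtoC (r a)) (Cmul (Cconj (dot n (psi a) w)) (dot n (psi a) v))).
Proof. unfold op; rewrite dot_lin_r; apply Csum_ext; intros; rewrite (dot_conj n (psi i) w); ring. Qed.

Lemma form_herm w v : dot n w (op v) = Cconj (dot n v (op w)).
Proof. rewrite !form_expand, Csum_conj; apply Csum_ext; intros; cring. Qed.

Lemma quad_form v : quad v = fst (dot n v (op v)).
Proof.
  rewrite form_expand, Csum_fst; apply Rsum_ext; intros.
  unfold Cnorm2, Cmul, Cconj, RtoC; simpl; ring.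
Qed.

Lemma quad_nonneg v : 0 <= quad v.
Proof. apply Rsum_nonneg; intros; apply Rmult_le_pos; auto; apply Cnorm2_nonneg. Qed.

Lemma quad_scal c v : quad (vscal c v) = Cnorm2 c * quad v.
Proof.
  unfold quad; rewrite <- Rsum_scal_l; apply Rsum_ext; intros.
  rewrite dot_scal_r, Cnorm2_mul; ring.
Qed.

Lemma quad_zero_vec v : (forall i, (i < n)%nat -> v i = C0) -> quad v = 0.
Proof. intros Hv; apply Rsum_zero; intros; rewrite dot_zero_r, Cnorm2_C0; auto; ring. Qed.

Lemma quad_vcomb v (eps : R) w :
  quad (vcomb v (RtoC eps) w) = quad v + 2 * eps * fst (dot n w (op v)) + eps * eps * quad w.
Proof.
  unfold quad; rewrite form_expand, Csum_fst, <- !Rsum_scal_l, <- !Rsum_plus.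
  apply Rsum_ext; intros; rewrite dot_vcomb.
  unfold Cnorm2, Cmul, Cconj, RtoC, Cadd; simpl; ring.
Qed.

Lemma nrm2_vcomb v (eps : R) w :
  nrm2 n (vcomb v (RtoC eps) w) = nrm2 n v + 2 * eps * fst (dot n w v) + eps * eps * nrm2 n w.
Proof.
  unfold nrm2, dot; rewrite Csum_fst, <- !Rsum_scal_l, <- !Rsum_plus.
  apply Rsum_ext; intros; unfold vcomb, Cnorm2, Cmul, Cconj, RtoC, Cadd; simpl; ring.
Qed.

Lemma quad_unit_bound v : nrm2 n v = 1 -> quad v <= Rsum N (fun a => r a * nrm2 n (psi a)).
Proof.
  intros Hv; apply Rsum_le; intros; apply Rmult_le_compat_l; auto.
  pose proof (cauchy_schwarz n (psi i) v); rewrite Hv in *; lra.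
Qed.

Lemma cv_quad s l : vec_cv n s l -> Un_cv (fun p => quad (s p)) (quad l).
Proof.
  intros Hl; apply cv_Rsum; intros; apply CV_mult; [apply cv_const |].
  apply cv_Cnorm2, Ccv_dot, Hl.
Qed.

Section Complement.

Variables (M : nat) (e : nat -> cvec).

Lemma sphere_closed s l :
  vec_cv n s l -> (forall p, perp n M e (s p) /\ nrm2 n (s p) = 1) ->
  perp n M e l /\ nrm2 n l = 1.
Proof.
  intros Hl Hs. split.
  - intros m Hm. apply (Ccv_const_eq (fun p => dot n (e m) (s p))); [| apply Ccv_dot, Hl].
    intros p; apply Hs, Hm.
  - apply (UL_sequence (fun p => nrm2 n (s p))); [apply cv_Rsum; intros i Hi; apply cv_Cnorm2, Hl, Hi |].
    eapply Un_cv_ext; [| apply cv_const]. intros p; simpl; symmetry; apply Hs.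
Qed.

Lemma quad_max_on_sphere :
  (exists v0, perp n M e v0 /\ nrm2 n v0 = 1) ->
  exists v, perp n M e v /\ nrm2 n v = 1 /\
    forall u, perp n M e u -> nrm2 n u = 1 -> quad u <= quad v.
Proof.
  intros [v0 Hv0].
  set (values := fun x => exists v, (perp n M e v /\ nrm2 n v = 1) /\ x = quad v).
  destruct (completeness values) as [Mx [Hub Hlub]].
  { exists (Rsum N (fun a => r a * nrm2 n (psi a))).
    intros x [v [[_ Hv] ->]]; apply quad_unit_bound; auto. }
  { exists (quad v0), v0; auto. }
  assert (Happ : forall p : nat, exists v,
             (perp n M e v /\ nrm2 n v = 1) /\ Mx - / INR (S p) < quad v).
  { intros p. apply NNPP; intro Hno.
    assert (Hsmall : is_upper_bound values (Mx - / INR (S p))).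
    { intros x [v [Hv ->]]. apply Rnot_lt_le; intro; apply Hno; exists v; auto. }
    apply Hlub in Hsmall. assert (0 < / INR (S p)) by (apply Rinv_0_lt_compat, lt_0_INR; lia).
    lra. }
  destruct (choice _ Happ) as [s Hs].
  destruct (extract_vec n s) as [phi [l [Hphi Hl]]].
  { intros p i Hi. destruct (Hs p) as [[_ Hn] _]. rewrite <- Hn.
    apply (Rsum_term_le n (fun i => Cnorm2 (s p i))); auto; intros; apply Cnorm2_nonneg. }
  assert (Hls : perp n M e l /\ nrm2 n l = 1) by (apply (sphere_closed _ _ Hl); intros; apply Hs).
  assert (HQl : quad l = Mx).
  { apply (UL_sequence (fun p => quad (s (phi p)))); [apply cv_quad, Hl |].
    intros eps He. destruct (inv_succ_small eps He) as [K HK]. exists K; intros p Hp.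
    destruct (Hs (phi p)) as [Hsp Hgt].
    assert (quad (s (phi p)) <= Mx) by (apply Hub; exists (s (phi p)); auto).
    assert (/ INR (S (phi p)) < eps) by (apply HK; pose proof (incr_ge phi Hphi p); lia).
    unfold Rdist; rewrite Rabs_left1; lra. }
  exists l. split; [apply Hls | split; [apply Hls |]].
  intros u Hu Hun. rewrite HQl. apply Hub. exists u; auto.
Qed.

Lemma maximizer :
  (exists v0, perp n M e v0 /\ nrm2 n v0 = 1) ->
  exists v, perp n M e v /\ nrm2 n v = 1 /\
    forall u, perp n M e u -> quad u <= quad v * nrm2 n u.
Proof.
  intros Hex. destruct (quad_max_on_sphere Hex) as [v [Hv [Hvn Hmax]]].
  exists v; split; [auto | split; [auto |]]. intros u Hu.
  destruct (Req_dec (nrm2 n u) 0) as [H0 | H0].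
  - rewrite quad_zero_vec, H0; [lra |]. intros; apply (nrm2_zero n); auto.
  - assert (Hp : 0 < nrm2 n u) by (pose proof (nrm2_nonneg n u); lra).
    set (c := / sqrt (nrm2 n u)).
    assert (Hc : Cnorm2 (RtoC c) * nrm2 n u = 1) by (rewrite <- nrm2_scal; apply normalize, Hp).
    assert (Hle : quad (vscal (RtoC c) u) <= quad v).
    { apply Hmax; [| apply normalize, Hp]. intros m Hm; rewrite dot_scal_r, Hu; auto; cring. }
    rewrite quad_scal in Hle. pose proof (quad_nonneg v).
    apply (Rmult_le_compat_r (nrm2 n u)) in Hle; [| lra].
    replace (Cnorm2 (RtoC c) * quad u * nrm2 n u) with (quad u) in Hle; [lra |].
    transitivity (quad u * (Cnorm2 (RtoC c) * nrm2 n u)); [rewrite Hc | ]; ring.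
Qed.

Lemma maximizer_stationary v :
  perp n M e v -> nrm2 n v = 1 ->
  (forall u, perp n M e u -> quad u <= quad v * nrm2 n u) ->
  forall w, perp n M e w -> dot n w (op v) = Cmul (RtoC (quad v)) (dot n w v).
Proof.
  intros Hv Hn Hmax.
  assert (Hperp : forall c w, perp n M e w -> perp n M e (vcomb v c w)).
  { intros c w Hw m Hm; rewrite dot_vcomb, Hv, Hw; auto; cring. }
  assert (Hre : forall w, perp n M e w -> fst (dot n w (op v)) = quad v * fst (dot n w v)).
  { intros w Hw.
    enough (fst (dot n w (op v)) - quad v * fst (dot n w v) = 0) by lra.
    apply (real_quad_zero _ (quad w - quad v * nrm2 n w)). intros eps.
    pose proof (Hmax _ (Hperp (RtoC eps) w Hw)) as H.
    rewrite quad_vcomb, nrm2_vcomb, Hn in H. nra. }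
  intros w Hw. apply Ceq.
  - rewrite Hre; auto; unfold Cmul, RtoC; simpl; ring.
  - assert (Hiw : perp n M e (vscal (0, 1) w)) by (intros m Hm; rewrite dot_scal_r, Hw; auto; cring).
    pose proof (Hre _ Hiw) as H. rewrite !dot_scal_l in H.
    unfold Cmul, Cconj, RtoC in *; simpl in *; lra.
Qed.

Definition eigen (lam : nat -> R) : Prop :=
  forall m, (m < M)%nat -> 0 <= lam m /\
    forall i, (i < n)%nat -> op (e m) i = Cmul (RtoC (lam m)) (e m i).

Lemma form_eigen_l lam m v : eigen lam -> (m < M)%nat ->
  dot n (e m) (op v) = Cmul (RtoC (lam m)) (dot n (e m) v).
Proof.
  intros He Hm. rewrite form_herm.
  rewrite (dot_ext n v v _ (vscal (RtoC (lam m)) (e m))); [| auto | apply He, Hm].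
  rewrite dot_scal_r, Cconj_mul, <- dot_conj; cring.
Qed.

Lemma maximizer_eigen lam v :
  eigen lam -> perp n M e v -> nrm2 n v = 1 ->
  (forall u, perp n M e u -> quad u <= quad v * nrm2 n u) ->
  forall i, (i < n)%nat -> op v i = Cmul (RtoC (quad v)) (v i).
Proof.
  intros He Hv Hn Hmax.
  set (z := vcomb (op v) (RtoC (- quad v)) v).
  assert (Hz : perp n M e z).
  { intros m Hm. unfold z. rewrite dot_vcomb, (form_eigen_l lam), Hv; auto. cring. }
  assert (Hzz : dot n z z = C0).
  { unfold z at 2. rewrite dot_vcomb, (maximizer_stationary v Hv Hn Hmax z Hz). cring. }
  rewrite dot_self in Hzz. apply (f_equal fst) in Hzz.
  intros i Hi. pose proof (nrm2_zero n z i Hzz Hi) as Hzi. unfold z, vcomb in Hzi.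
  apply Ceq; [apply (f_equal fst) in Hzi | apply (f_equal snd) in Hzi];
    unfold Cadd, C0, Cmul, RtoC in *; simpl in *; lra.
Qed.

Lemma op_zero w : quad w = 0 -> forall i, (i < n)%nat -> op w i = C0.
Proof.
  intros HQ i Hi. unfold op, lin. rewrite (Csum_ext N _ (fun _ => C0)); [apply Csum_zero |].
  intros a Ha. destruct (Rle_lt_or_eq_dec 0 (r a) (r_nonneg a Ha)) as [Hpos | <-].
  - rewrite (weighted_sum_zero N r (fun a => dot n (psi a) w) a); auto. cring.
  - cring.
Qed.

Lemma diagonalized lam :
  orthonormal n M e -> eigen lam -> (forall w, perp n M e w -> quad w = 0) ->
  forall v, quad v = Rsum M (fun m => lam m * Cnorm2 (dot n (e m) v)).
Proof.
  intros Ho He H0 v.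
  set (c := fun m => dot n (e m) v). set (w := resid n M e v).
  assert (Hwv : dot n w (op v) = C0).
  { rewrite form_herm, dot_zero_r; [cring |]. apply op_zero, H0, resid_perp, Ho. }
  rewrite quad_form, (dot_ext n v (fun i => Cadd (lin M c e i) (w i)) (op v) (op v));
    [| intros; unfold w, resid, c; ring | auto].
  rewrite dot_add_l, Hwv, dot_lin_l. unfold Cadd at 1; simpl. rewrite Csum_fst, Rplus_0_r.
  apply Rsum_ext; intros m Hm. rewrite (form_eigen_l lam); auto.
  unfold c, Cnorm2, Cmul, Cconj, RtoC; simpl; ring.
Qed.

End Complement.

(** An eigenfamily whose complement still carries some of sigma extends by one
    eigenvector: a maximiser of [quad] on the unit sphere of the complement. *)
Lemma eigenfamily_extend M e lam w :
  orthonormal n M e -> eigen M e lam -> perp n M e w -> 0 < quad w ->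
  exists v, orthonormal n (S M) (ext M e v) /\
    eigen (S M) (ext M e v) (fun m => if Nat.eqb m M then quad v else lam m).
Proof.
  intros Ho He Hw HQ.
  assert (Hnw : 0 < nrm2 n w).
  { destruct (Req_dec (nrm2 n w) 0) as [H0 | H0]; [| pose proof (nrm2_nonneg n w); lra].
    rewrite quad_zero_vec in HQ; [lra | intros; apply (nrm2_zero n); auto]. }
  destruct (maximizer M e) as [v [Hv [Hvn Hmax]]].
  { exists (vscal (RtoC (/ sqrt (nrm2 n w))) w).
    split; [intros m Hm; rewrite dot_scal_r, Hw; auto; cring | apply normalize; auto]. }
  exists v. split; [apply orth_extend; auto |].
  intros m Hm. unfold ext. destruct (Nat.eqb_spec m M) as [-> | Hm'].
  - split; [apply quad_nonneg | apply (maximizer_eigen M e lam); auto].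
  - apply He; lia.
Qed.

Lemma eigenfamily_complete M e lam :
  orthonormal n M e -> eigen M e lam -> ~ (exists w, perp n M e w /\ 0 < quad w) ->
  forall v, quad v = Rsum M (fun m => lam m * Cnorm2 (dot n (e m) v)).
Proof.
  intros Ho He Hno. apply diagonalized; auto. intros w Hw.
  pose proof (quad_nonneg w). apply NNPP; intro; apply Hno; exists w; split; auto; lra.
Qed.

(** Induction on the codimension [n - M] of the eigenfamily found so far. *)
Lemma spectral_from k : forall M e lam,
  orthonormal n M e -> eigen M e lam -> (n - M <= k)%nat ->
  exists M' e' lam', orthonormal n M' e' /\ (forall m, (m < M')%nat -> 0 <= lam' m) /\
    forall v, quad v = Rsum M' (fun m => lam' m * Cnorm2 (dot n (e' m) v)).
Proof.
  induction k as [| k IH]; intros M e lam Ho He Hk;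
    (destruct (classic (exists w, perp n M e w /\ 0 < quad w)) as [[w [Hw HQ]] | Hno];
     [destruct (eigenfamily_extend M e lam w Ho He Hw HQ) as [v [Ho' He']];
      pose proof (orth_dim _ _ _ Ho')
     | exists M, e, lam; split; [auto | split; [intros; apply He; auto |]];
       apply eigenfamily_complete; auto]).
  - lia.
  - apply (IH _ _ _ Ho' He'); lia.
Qed.

Theorem spectral :
  exists M e lam, orthonormal n M e /\ (forall m, (m < M)%nat -> 0 <= lam m) /\
    forall v, quad v = Rsum M (fun m => lam m * Cnorm2 (dot n (e m) v)).
Proof.
  apply (spectral_from n O (fun _ _ => C0) (fun _ => 0)); [intros k l Hk; lia | intros m Hm; lia | lia].
Qed.

End Ensemble.

(** * The function eta(x) = - x log2 x *)

Definition eta (x : R) : R := - xlog2x x.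

Lemma ln2_pos : 0 < ln 2.
Proof. pose proof ln_lt_2; lra. Qed.

Lemma eta_pos x : 0 < x -> eta x = - x * ln x / ln 2.
Proof.
  intros. unfold eta, xlog2x, log2. destruct (Rle_dec x 0); [lra |].
  field. pose proof ln2_pos; lra.
Qed.

Lemma eta_0 : eta 0 = 0.
Proof. unfold eta, xlog2x. destruct (Rle_dec 0 0); lra. Qed.

Lemma eta_nonneg x : 0 <= x <= 1 -> 0 <= eta x.
Proof.
  intros Hx. destruct (Req_dec x 0) as [-> | Hx0]; [rewrite eta_0; lra |].
  rewrite eta_pos by lra. pose proof ln2_pos.
  assert (ln x <= 0).
  { destruct (Req_dec x 1) as [-> | Hx1]; [rewrite ln_1; lra |].
    rewrite <- ln_1; left; apply ln_increasing; lra. }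
  apply Rmult_le_pos; [nra | left; apply Rinv_0_lt_compat; auto].
Qed.

Lemma eta_mul a b : 0 <= a -> 0 <= b -> eta (a * b) = a * eta b + b * eta a.
Proof.
  intros. destruct (Req_dec a 0) as [-> |]; [rewrite Rmult_0_l, eta_0; ring |].
  destruct (Req_dec b 0) as [-> |]; [rewrite Rmult_0_r, eta_0; ring |].
  rewrite !eta_pos by nra. rewrite ln_mult by lra. field. pose proof ln2_pos; lra.
Qed.

Lemma eta_tangent X x : 0 < X -> 0 <= x -> eta x * ln 2 <= - x * ln X - x + X.
Proof.
  intros HX Hx. destruct (Req_dec x 0) as [-> | Hx0]; [rewrite eta_0; lra |].
  rewrite eta_pos by lra. pose proof ln2_pos.
  replace (- x * ln x / ln 2 * ln 2) with (- x * ln x) by (field; lra).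
  assert (Hq : 0 < X / x) by (apply Rdiv_lt_0_compat; lra).
  pose proof (exp_ineq1_le (ln (X / x))) as Hln. rewrite exp_ln in Hln by auto.
  unfold Rdiv in Hln. rewrite ln_mult, ln_Rinv in Hln by (try apply Rinv_0_lt_compat; lra).
  apply (Rmult_le_compat_l x) in Hln; [| lra].
  replace (x * (X * / x)) with X in Hln by (field; lra). nra.
Qed.

(** Jensen's inequality for eta with subnormalised weights (eta(0) = 0). *)
Lemma eta_jensen K (w x : nat -> R) :
  (forall m, (m < K)%nat -> 0 <= w m) -> (forall m, (m < K)%nat -> 0 <= x m) ->
  Rsum K w <= 1 ->
  Rsum K (fun m => w m * eta (x m)) <= eta (Rsum K (fun m => w m * x m)).
Proof.
  intros Hw Hx Hs. set (X := Rsum K (fun m => w m * x m)).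
  assert (Hwx : forall m, (m < K)%nat -> 0 <= w m * x m) by (intros; apply Rmult_le_pos; auto).
  assert (HX0 : 0 <= X) by (apply Rsum_nonneg; auto).
  destruct (Req_dec X 0) as [HX | HX].
  - rewrite HX, eta_0. right. apply Rsum_zero; intros m Hm.
    destruct (Rmult_integral _ _ (Rsum_nonneg_eq0 K _ m Hwx HX Hm)) as [-> | ->];
      [| rewrite eta_0]; ring.
  - assert (HXp : 0 < X) by lra. pose proof ln2_pos.
    apply (Rmult_le_reg_r (ln 2)); auto.
    rewrite eta_pos, <- Rsum_scal_r by auto.
    replace (- X * ln X / ln 2 * ln 2) with (- X * ln X) by (field; lra).
    apply Rle_trans with (Rsum K (fun m => w m * (- x m * ln X - x m + X))).
    + apply Rsum_le; intros. rewrite Rmult_assoc.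
      apply Rmult_le_compat_l; auto. apply eta_tangent; auto.
    + rewrite (Rsum_ext K _ (fun m => (- ln X - 1) * (w m * x m) + X * w m)) by (intros; ring).
      rewrite Rsum_plus, !Rsum_scal_l. fold X.
      assert (X * Rsum K w <= X) by nra. nra.
Qed.

Lemma eta_mix_lower q s c : 0 <= q <= 1 -> 0 <= s -> 0 <= c <= 1 - q ->
  q * eta s <= eta (q * s + c).
Proof.
  intros Hq Hs Hc. destruct (Req_dec q 1) as [-> | Hq1].
  - replace c with 0 by lra. rewrite Rplus_0_r, !Rmult_1_l; lra.
  - set (b := c / (1 - q)).
    assert (Hb : 0 <= b <= 1).
    { unfold b; split; [apply Rmult_le_pos; [| left; apply Rinv_0_lt_compat]; lra |].
      apply (Rmult_le_reg_r (1 - q)); [lra |]. unfold Rdiv; rewrite Rmult_assoc, Rinv_l; lra. }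
    pose proof (eta_jensen 2 (fun k => if Nat.eqb k 0 then q else 1 - q)
                           (fun k => if Nat.eqb k 0 then s else b)) as J.
    simpl in J. replace (q * s + c) with (0 + q * s + (1 - q) * b) by (unfold b; field; lra).
    pose proof (eta_nonneg b Hb).
    assert (0 + q * eta s + (1 - q) * eta b <= eta (0 + q * s + (1 - q) * b)).
    { apply J; [intros k Hk | intros k Hk | lra]; destruct (Nat.eqb k 0); lra. }
    assert (0 <= (1 - q) * eta b) by (apply Rmult_le_pos; lra). lra.
Qed.

(** * Entropy inequalities for ensemble operators *)

Lemma span_of_support n M e K f nu j :
  orthonormal n M e -> (forall j, (j < K)%nat -> 0 <= nu j) ->
  (forall w, perp n M e w -> quad n K nu f w = 0) ->
  (j < K)%nat -> 0 < nu j ->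
  Rsum M (fun m => Cnorm2 (dot n (e m) (f j))) = nrm2 n (f j).
Proof.
  intros Ho Hnu H0 Hj Hpos. apply in_span; auto.
  set (w := resid n M e (f j)).
  apply (weighted_sum_zero K nu (fun j => dot n (f j) w) j); auto.
  apply H0, resid_perp, Ho.
Qed.

Section UpperBound.

(** sigma = sum_a r_a |psi_a><psi_a| with unit vectors psi_a, diagonalised by (e, lam). *)
Variables (n N : nat) (r : nat -> R) (psi : nat -> cvec) (M : nat) (e : nat -> cvec) (lam : nat -> R).
Hypothesis r_nonneg : forall a, (a < N)%nat -> 0 <= r a.
Hypothesis psi_unit : forall a, (a < N)%nat -> nrm2 n (psi a) = 1.
Hypothesis e_on : orthonormal n M e.
Hypothesis lam_nonneg : forall m, (m < M)%nat -> 0 <= lam m.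
Hypothesis diag : forall v, quad n N r psi v = Rsum M (fun m => lam m * Cnorm2 (dot n (e m) v)).

Lemma eigval_quad m : (m < M)%nat -> lam m = quad n N r psi (e m).
Proof. intros Hm. rewrite diag, sum_on_basis; auto. Qed.

Lemma overlap_zero a m : (a < N)%nat -> 0 < r a -> (m < M)%nat -> lam m = 0 ->
  dot n (e m) (psi a) = C0.
Proof.
  intros Ha Hra Hm H0. rewrite eigval_quad in H0 by auto.
  rewrite dot_conj, (weighted_sum_zero N r (fun a => dot n (psi a) (e m)) a); auto. cring.
Qed.

(** The matrix W_am = r_a |<e_m, psi_a>|^2 / lam_m expresses r in terms of lam. *)
Definition weight (a m : nat) : R :=
  if Rlt_dec 0 (lam m) then r a * Cnorm2 (dot n (e m) (psi a)) / lam m else 0.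

Lemma weight_nonneg a m : (a < N)%nat -> 0 <= weight a m.
Proof.
  intros Ha. unfold weight. destruct (Rlt_dec 0 (lam m)); [| lra].
  apply Rmult_le_pos; [apply Rmult_le_pos; auto; apply Cnorm2_nonneg |].
  left; apply Rinv_0_lt_compat; auto.
Qed.

Lemma weight_col m : (m < M)%nat -> 0 < lam m -> Rsum N (fun a => weight a m) = 1.
Proof.
  intros Hm Hl. unfold weight. destruct (Rlt_dec 0 (lam m)); [| lra].
  unfold Rdiv. rewrite Rsum_scal_r.
  rewrite (Rsum_ext N _ (fun a => r a * Cnorm2 (dot n (psi a) (e m))))
    by (intros; rewrite Cnorm2_dot_sym; auto).
  fold (quad n N r psi (e m)). rewrite <- eigval_quad by auto. field; lra.
Qed.

Lemma weight_mean a : (a < N)%nat -> r a = Rsum M (fun m => weight a m * lam m).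
Proof.
  intros Ha. destruct (Rle_lt_or_eq_dec 0 (r a) (r_nonneg a Ha)) as [Hra | Hr0].
  - rewrite <- (Rmult_1_r (r a)) at 1. rewrite <- (psi_unit a Ha).
    rewrite <- (span_of_support n M e N psi r a); auto.
    2: { intros w Hw. rewrite diag. apply Rsum_zero; intros; rewrite Hw, Cnorm2_C0; auto; ring. }
    rewrite <- Rsum_scal_l. apply Rsum_ext; intros m Hm. unfold weight.
    destruct (Rlt_dec 0 (lam m)); [field; lra |].
    rewrite overlap_zero, Cnorm2_C0; auto; [ring | pose proof (lam_nonneg m Hm); lra].
  - rewrite <- Hr0, Rsum_zero; auto. intros m Hm. unfold weight. rewrite <- Hr0.
    destruct (Rlt_dec 0 (lam m)); unfold Rdiv; ring.
Qed.

(** Row sums of W are at most 1: test sigma against v = sum_m (c_m / lam_m) e_m. *)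
Lemma weight_row a : (a < N)%nat -> Rsum M (weight a) <= 1.
Proof.
  intros Ha. destruct (Rle_lt_or_eq_dec 0 (r a) (r_nonneg a Ha)) as [Hra | Hr0].
  2: { rewrite Rsum_zero; [lra |]. intros m Hm; unfold weight; rewrite <- Hr0.
       destruct (Rlt_dec 0 (lam m)); unfold Rdiv; ring. }
  set (c := fun m => dot n (e m) (psi a)).
  set (d := fun m => if Rlt_dec 0 (lam m) then Cmul (c m) (RtoC (/ lam m)) else C0).
  set (S := Rsum M (fun m => if Rlt_dec 0 (lam m) then Cnorm2 (c m) / lam m else 0)).
  set (v := lin M d e).
  assert (HS : Rsum M (weight a) = r a * S).
  { unfold S; rewrite <- Rsum_scal_l; apply Rsum_ext; intros; unfold weight, c.
    destruct (Rlt_dec 0 (lam i)); [field; lra | ring]. }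
  assert (HS0 : 0 <= S).
  { apply Rsum_nonneg; intros; destruct (Rlt_dec 0 (lam i)); [| lra].
    apply Rmult_le_pos; [apply Cnorm2_nonneg | left; apply Rinv_0_lt_compat; auto]. }
  assert (Hquad : quad n N r psi v = S).
  { rewrite diag; apply Rsum_ext; intros; unfold v; rewrite dot_on_lin; auto; unfold d.
    destruct (Rlt_dec 0 (lam i)); [rewrite Cnorm2_mul, Cnorm2_RtoC; field; lra | rewrite Cnorm2_C0; ring]. }
  assert (Hdot : dot n (psi a) v = RtoC S).
  { unfold v, S; rewrite dot_lin_r, <- Csum_RtoC. apply Csum_ext; intros m Hm.
    rewrite (dot_conj n (e m) (psi a)); fold (c m); unfold d.
    destruct (Rlt_dec 0 (lam m)); apply Ceq; unfold Cnorm2, Cmul, Cconj, RtoC, C0; simpl;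
      try field; lra. }
  assert (Hterm : r a * Cnorm2 (dot n (psi a) v) <= quad n N r psi v).
  { apply (Rsum_term_le N (fun a => r a * Cnorm2 (dot n (psi a) v))); auto.
    intros; apply Rmult_le_pos; auto; apply Cnorm2_nonneg. }
  rewrite Hquad, Hdot, Cnorm2_RtoC in Hterm. rewrite HS.
  destruct (Req_dec S 0) as [-> | HSn]; [lra |].
  apply (Rmult_le_reg_r S); lra.
Qed.

Theorem entropy_le_weights : Rsum M (fun m => eta (lam m)) <= Rsum N (fun a => eta (r a)).
Proof.
  apply Rle_trans with (Rsum N (fun a => Rsum M (fun m => weight a m * eta (lam m)))).
  - rewrite Rsum_comm. right. apply Rsum_ext; intros m Hm. rewrite Rsum_scal_r.
    destruct (Rle_lt_or_eq_dec 0 (lam m) (lam_nonneg m Hm)) as [Hl | <-].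
    + rewrite weight_col; auto; ring.
    + rewrite eta_0; ring.
  - apply Rsum_le; intros a Ha. rewrite (weight_mean a Ha).
    apply eta_jensen; [intros; apply weight_nonneg | | apply weight_row]; auto.
Qed.

End UpperBound.

Section LowerBound.

(** sigma = q rho + R, where sigma is diagonalised by (e, lam), rho by (f, nu),
    and R is a positive form whose trace along e is at most 1 - q. *)
Variables (n M K : nat) (e f : nat -> cvec) (lam nu : nat -> R) (q : R) (Rv : cvec -> R).
Hypothesis e_on : orthonormal n M e.
Hypothesis f_on : orthonormal n K f.
Hypothesis nu_nonneg : forall j, (j < K)%nat -> 0 <= nu j.
Hypothesis q_range : 0 <= q <= 1.
Hypothesis Rv_nonneg : forall v, 0 <= Rv v.
Hypothesis Rv_trace : Rsum M (fun m => Rv (e m)) <= 1 - q.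
Hypothesis decomp : forall v,
  Rsum M (fun m => lam m * Cnorm2 (dot n (e m) v)) = q * quad n K nu f v + Rv v.

Lemma diag_split m : (m < M)%nat -> lam m = q * quad n K nu f (e m) + Rv (e m).
Proof. intros Hm. rewrite <- decomp, sum_on_basis; auto. Qed.

Lemma eta_eigval_lower m : (m < M)%nat -> q * eta (quad n K nu f (e m)) <= eta (lam m).
Proof.
  intros Hm. rewrite diag_split by auto. apply eta_mix_lower; auto using quad_nonneg.
  split; [auto |]. eapply Rle_trans; [| apply Rv_trace].
  apply (Rsum_term_le M (fun m => Rv (e m))); auto.
Qed.

(** <e_m, rho e_m> is an average of the nu_j, with weights |<f_j, e_m>|^2 of sum <= 1. *)
Lemma eta_diag_lower m : (m < M)%nat ->
  Rsum K (fun j => Cnorm2 (dot n (f j) (e m)) * eta (nu j)) <= eta (quad n K nu f (e m)).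
Proof.
  intros Hm. unfold quad.
  rewrite (Rsum_ext K (fun j => nu j * _) (fun j => Cnorm2 (dot n (f j) (e m)) * nu j)) by (intros; ring).
  apply eta_jensen; auto; [intros; apply Cnorm2_nonneg |].
  eapply Rle_trans; [apply bessel; eauto |]. rewrite (on_unit n M e e_on m Hm); lra.
Qed.

Lemma f_in_span j : 0 < q -> (j < K)%nat -> 0 < nu j ->
  Rsum M (fun m => Cnorm2 (dot n (e m) (f j))) = 1.
Proof.
  intros Hq Hj Hnu. rewrite (span_of_support n M e K f nu j); auto.
  - apply (on_unit n K f f_on j Hj).
  - intros w Hw. pose proof (decomp w) as Hd.
    rewrite Rsum_zero in Hd by (intros; rewrite Hw, Cnorm2_C0; auto; ring).
    pose proof (quad_nonneg n K nu f nu_nonneg w). pose proof (Rv_nonneg w). nra.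
Qed.

Theorem entropy_ge_component : q * Rsum K (fun j => eta (nu j)) <= Rsum M (fun m => eta (lam m)).
Proof.
  assert (Hmix : q * Rsum K (fun j => eta (nu j)) =
                 q * Rsum K (fun j => Rsum M (fun m => Cnorm2 (dot n (f j) (e m))) * eta (nu j))).
  { destruct (Req_dec q 0) as [-> | Hq]; [ring |]. f_equal. apply Rsum_ext; intros j Hj.
    destruct (Rle_lt_or_eq_dec 0 (nu j) (nu_nonneg j Hj)) as [Hnu | <-]; [| rewrite eta_0; ring].
    rewrite (Rsum_ext M _ (fun m => Cnorm2 (dot n (e m) (f j)))) by (intros; apply Cnorm2_dot_sym).
    rewrite f_in_span; auto; [ring | lra]. }
  rewrite Hmix. apply Rle_trans with (Rsum M (fun m => q * eta (quad n K nu f (e m)))).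
  - rewrite Rsum_scal_l. apply Rmult_le_compat_l; [lra |].
    rewrite (Rsum_ext K _ (fun j => Rsum M (fun m => Cnorm2 (dot n (f j) (e m)) * eta (nu j))))
      by (intros; symmetry; apply Rsum_scal_r).
    rewrite Rsum_comm. apply Rsum_le; intros; apply eta_diag_lower; auto.
  - apply Rsum_le; intros; apply eta_eigval_lower; auto.
Qed.

End LowerBound.

(** * Reduced density matrices

    For x in H_A (x) H_B, Tr_B |x><x| = sum_k |x_k><x_k| where x_k is the k-th
    column of x; its quadratic form is therefore an ensemble form with unit weights. *)

Definition col (x : bivec) (k : nat) : cvec := fun i => x i k.
Definition rdm_quad (dA dB : nat) (x : bivec) (v : cvec) : R := quad dA dB (fun _ => 1) (col x) v.

Lemma matrix_form n K (c : nat -> R) (y : nat -> cvec) (rho : nat -> nat -> Cpx) v :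
  (forall i j, (i < n)%nat -> (j < n)%nat ->
     rho i j = Csum K (fun k => Cmul (RtoC (c k)) (Cmul (y k i) (Cconj (y k j))))) ->
  fst (Csum n (fun i => Csum n (fun j => Cmul (Cmul (Cconj (v i)) (rho i j)) (v j)))) =
  quad n K c y v.
Proof.
  intros Hr.
  rewrite (Csum_ext n _ (fun i => Csum K (fun k => Csum n (fun j =>
     Cmul (RtoC (c k)) (Cmul (Cmul (Cconj (v i)) (y k i)) (Cmul (Cconj (y k j)) (v j))))))).
  2: { intros i Hi. rewrite <- Csum_comm. apply Csum_ext; intros j Hj. rewrite Hr; auto.
       rewrite <- Csum_scal_l, <- Csum_scal_r. apply Csum_ext; intros; ring. }
  rewrite Csum_comm, Csum_fst. apply Rsum_ext; intros k Hk.
  rewrite (Csum_ext n _ (fun i => Cmul (Cmul (RtoC (c k)) (Cmul (Cconj (v i)) (y k i))) (dot n (y k) v))).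
  2: { intros; unfold dot; rewrite <- Csum_scal_l; apply Csum_ext; intros; ring. }
  rewrite Csum_scal_r, Csum_scal_l.
  change (Csum n (fun i => Cmul (Cconj (v i)) (y k i))) with (dot n v (y k)).
  rewrite (dot_conj n (y k) v). unfold Cnorm2, Cmul, Cconj, RtoC; simpl; ring.
Qed.

Lemma spectrum_diag dA dB x lam : is_spectrum dA (red_dm dB x) lam ->
  exists u, orthonormal dA dA u /\
    forall v, rdm_quad dA dB x v = Rsum dA (fun m => lam m * Cnorm2 (dot dA (u m) v)).
Proof.
  intros [u [Hon Hrho]]. exists u. split.
  - intros k l Hk Hl. rewrite dot_conj. unfold dot.
    rewrite (Csum_ext dA _ (fun i => Cmul (u k i) (Cconj (u l i)))) by (intros; cring).
    rewrite Hon; auto. destruct (Nat.eqb k l); cring.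
  - intros v. unfold rdm_quad. rewrite <- (matrix_form dA dB (fun _ => 1) (col x) (red_dm dB x) v),
      (matrix_form dA dA lam u (red_dm dB x) v); auto.
    intros i j Hi Hj; unfold red_dm, col; apply Csum_ext; intros; cring.
Qed.

Lemma rdm_trace dA dB x :
  Rsum dA (fun i => rdm_quad dA dB x (delta_vec i)) = Rsum dA (fun i => Rsum dB (fun k => Cnorm2 (x i k))).
Proof.
  apply Rsum_ext; intros i Hi. unfold rdm_quad, quad. apply Rsum_ext; intros.
  rewrite dot_delta, Cnorm2_conj by auto; unfold col; ring.
Qed.

Lemma rdm_trace_bessel dA dB x M e : orthonormal dA M e ->
  Rsum M (fun m => rdm_quad dA dB x (e m)) <= Rsum dA (fun i => Rsum dB (fun k => Cnorm2 (x i k))).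
Proof.
  intros Ho. rewrite <- rdm_trace. unfold rdm_quad, quad.
  rewrite Rsum_comm, (Rsum_comm dA dB). apply Rsum_le; intros k Hk.
  rewrite (Rsum_ext M _ (fun m => Cnorm2 (dot dA (e m) (col x k))))
    by (intros; rewrite Cnorm2_dot_sym; ring).
  eapply Rle_trans; [apply bessel, Ho |]. right; unfold nrm2.
  apply Rsum_ext; intros; rewrite dot_delta, Cnorm2_conj; auto; ring.
Qed.

Lemma spectrum_props dA dB x u lam : orthonormal dA dA u ->
  (forall v, rdm_quad dA dB x v = Rsum dA (fun m => lam m * Cnorm2 (dot dA (u m) v))) ->
  (forall m, (m < dA)%nat -> 0 <= lam m) /\
  Rsum dA lam = Rsum dA (fun i => Rsum dB (fun k => Cnorm2 (x i k))).
Proof.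
  intros Ho Hq. split.
  - intros m Hm. rewrite <- (sum_on_basis dA dA u Ho lam m Hm), <- Hq. apply quad_nonneg; intros; lra.
  - rewrite <- rdm_trace.
    transitivity (Rsum dA (fun i => Rsum dA (fun m => lam m * Cnorm2 (u m i)))).
    + rewrite Rsum_comm. apply Rsum_ext; intros m Hm. rewrite Rsum_scal_l.
      fold (nrm2 dA (u m)). rewrite (on_unit dA dA u Ho m Hm); ring.
    + apply Rsum_ext; intros i Hi. rewrite Hq. apply Rsum_ext; intros.
      rewrite dot_delta, Cnorm2_conj; auto.
Qed.

Lemma vN_eta n lam : vN_of_spectrum n lam = Rsum n (fun m => eta (lam m)).
Proof. unfold vN_of_spectrum, eta. rewrite Rsum_opp; auto. Qed.

Lemma entanglement_spectrum dA dB x E :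
  is_unit_vec dA dB x -> Ent dA dB x E ->
  exists u lam, orthonormal dA dA u /\ (forall m, (m < dA)%nat -> 0 <= lam m) /\
    Rsum dA lam = 1 /\ E = Rsum dA (fun m => eta (lam m)) /\
    forall v, rdm_quad dA dB x v = Rsum dA (fun m => lam m * Cnorm2 (dot dA (u m) v)).
Proof.
  intros Hx [lam [Hs HE]]. destruct (spectrum_diag dA dB x lam Hs) as [u [Ho Hq]].
  destruct (spectrum_props dA dB x u lam Ho Hq) as [Hl Hsum].
  exists u, lam. repeat split; auto. rewrite Hsum; apply Hx. rewrite HE; apply vN_eta.
Qed.

(** * Mixtures and superpositions of states *)

Definition concat {A : Type} (K : nat) (a b : nat -> A) : nat -> A :=
  fun i => if Nat.ltb i K then a i else b (i - K)%nat.

Lemma concat_l {A : Type} K (a b : nat -> A) i : (i < K)%nat -> concat K a b i = a i.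
Proof. intros Hi; unfold concat; destruct (Nat.ltb_spec i K); [auto | lia]. Qed.

Lemma concat_r {A : Type} K (a b : nat -> A) i : concat K a b (K + i) = b i.
Proof. unfold concat; destruct (Nat.ltb_spec (K + i) K); [lia | f_equal; lia]. Qed.

Lemma Rsum_concat {A : Type} K L (f : A -> R) (a b : nat -> A) :
  Rsum (K + L) (fun i => f (concat K a b i)) = Rsum K (fun i => f (a i)) + Rsum L (fun i => f (b i)).
Proof.
  rewrite Rsum_app. f_equal; apply Rsum_ext; intros i Hi; [rewrite concat_l | rewrite concat_r]; auto.
Qed.

Lemma quad_concat n K L r1 r2 p1 p2 v :
  quad n (K + L) (concat K r1 r2) (concat K p1 p2) v = quad n K r1 p1 v + quad n L r2 p2 v.
Proof.
  unfold quad; rewrite Rsum_app.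
  f_equal; apply Rsum_ext; intros i Hi; [rewrite !concat_l | rewrite !concat_r]; auto.
Qed.

Lemma eta_scaled_sum n c lam : 0 <= c -> (forall m, (m < n)%nat -> 0 <= lam m) -> Rsum n lam = 1 ->
  Rsum n (fun m => eta (c * lam m)) = c * Rsum n (fun m => eta (lam m)) + eta c.
Proof.
  intros Hc Hl Hs. rewrite (Rsum_ext n _ (fun m => c * eta (lam m) + lam m * eta c))
    by (intros; apply eta_mul; auto).
  rewrite Rsum_plus, Rsum_scal_l, Rsum_scal_r, Hs; ring.
Qed.

(** The scalars of the decomposition of a mixture: with D = 1 - t (1 - |beta|^2),
    t |Gamma><Gamma| + (1 - t) |Phi><Phi| = q |Psi><Psi| + |w><w| / D
    where Gamma = alpha Psi + beta Phi and w = t alpha conj(beta) Psi + D Phi. *)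
Definition denom (t : R) (beta : Cpx) : R := 1 - t * (1 - Cnorm2 beta).
Definition qcoef (t : R) (alpha beta : Cpx) : R := t * (1 - t) * Cnorm2 alpha / denom t beta.
Definition rest_vec (t : R) (alpha beta : Cpx) (Psi Phi : bivec) : bivec :=
  lincomb (Cmul (RtoC t) (Cmul alpha (Cconj beta))) (RtoC (denom t beta)) Psi Phi.

(** The decomposition for a single pair of amplitudes P = <psi, v>, F = <phi, v>. *)
Lemma amplitude_identity (t : R) (alpha beta P F : Cpx) : denom t beta <> 0 ->
  t * Cnorm2 (Cadd (Cmul (Cconj alpha) P) (Cmul (Cconj beta) F)) + (1 - t) * Cnorm2 F =
  qcoef t alpha beta * Cnorm2 P +
  / denom t beta * Cnorm2 (Cadd (Cmul (Cconj (Cmul (RtoC t) (Cmul alpha (Cconj beta)))) P)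
                                (Cmul (Cconj (RtoC (denom t beta))) F)).
Proof.
  unfold qcoef, denom. intros HD. destruct alpha, beta, P, F.
  unfold Cnorm2, Cadd, Cmul, Cconj, RtoC in *; simpl in *. field; auto.
Qed.

Lemma dot_col_lincomb n a b x y k v :
  dot n (col (lincomb a b x y) k) v =
  Cadd (Cmul (Cconj a) (dot n (col x k) v)) (Cmul (Cconj b) (dot n (col y k) v)).
Proof.
  unfold col, lincomb. rewrite (dot_add_l n v (fun i => Cmul a (x i k)) (fun i => Cmul b (y i k))).
  change (fun i => Cmul a (x i k)) with (vscal a (col x k)).
  change (fun i => Cmul b (y i k)) with (vscal b (col y k)).
  rewrite !dot_scal_l; auto.
Qed.

Section Superposition.

Variables (dA dB : nat) (Psi Phi : bivec) (alpha beta : Cpx) (t : R).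
Hypothesis Psi_unit : is_unit_vec dA dB Psi.
Hypothesis Phi_unit : is_unit_vec dA dB Phi.
Hypothesis Gamma_unit : is_unit_vec dA dB (lincomb alpha beta Psi Phi).
Hypothesis t_range : 0 < t < 1.

Lemma denom_pos : 0 < denom t beta.
Proof. unfold denom; pose proof (Cnorm2_nonneg beta); nra. Qed.

Lemma mixture_split v :
  t * rdm_quad dA dB (lincomb alpha beta Psi Phi) v + (1 - t) * rdm_quad dA dB Phi v =
  qcoef t alpha beta * rdm_quad dA dB Psi v + / denom t beta * rdm_quad dA dB (rest_vec t alpha beta Psi Phi) v.
Proof.
  pose proof denom_pos. unfold rdm_quad, quad.
  rewrite <- !Rsum_scal_l, <- !Rsum_plus. apply Rsum_ext; intros k Hk.
  unfold rest_vec. rewrite !dot_col_lincomb, !Rmult_1_l. apply amplitude_identity; lra.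
Qed.

Lemma rest_trace :
  / denom t beta * Rsum dA (fun i => Rsum dB (fun k => Cnorm2 (rest_vec t alpha beta Psi Phi i k))) =
  1 - qcoef t alpha beta.
Proof.
  pose proof (Rsum_ext dA _ _ (fun i _ => mixture_split (delta_vec i))) as Htr.
  rewrite !Rsum_plus, !Rsum_scal_l, !rdm_trace in Htr.
  unfold is_unit_vec in *. rewrite Psi_unit, Phi_unit, Gamma_unit in Htr. lra.
Qed.

Lemma qcoef_range : 0 <= qcoef t alpha beta <= 1.
Proof.
  pose proof denom_pos. pose proof rest_trace as Htr. split.
  - unfold qcoef, Rdiv. apply Rmult_le_pos; [| left; apply Rinv_0_lt_compat; auto].
    pose proof (Cnorm2_nonneg alpha). apply Rmult_le_pos; [nra | auto].
  - assert (0 <= / denom t beta * Rsum dA (fun i => Rsum dB (fun k => Cnorm2 (rest_vec t alpha beta Psi Phi i k)))).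
    { apply Rmult_le_pos; [left; apply Rinv_0_lt_compat; auto |].
      apply Rsum_nonneg; intros; apply Rsum_nonneg; intros; apply Cnorm2_nonneg. }
    lra.
Qed.

(** The core estimate: q E(Psi) <= t E(Gamma) + (1 - t) E(Phi) + h2(t). Both sides are
    compared with the entropy of sigma = t rho_Gamma + (1 - t) rho_Phi. *)
Theorem key_inequality EPsi EPhi EGamma :
  Ent dA dB Psi EPsi -> Ent dA dB Phi EPhi -> Ent dA dB (lincomb alpha beta Psi Phi) EGamma ->
  qcoef t alpha beta * EPsi <= t * EGamma + (1 - t) * EPhi + h2 t.
Proof.
  intros HP HF HG.
  destruct (entanglement_spectrum _ _ _ _ Psi_unit HP) as [uP [lP [HoP [HlP [HsP [HEP HqP]]]]]].
  destruct (entanglement_spectrum _ _ _ _ Phi_unit HF) as [uF [lF [HoF [HlF [HsF [HEF HqF]]]]]].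
  destruct (entanglement_spectrum _ _ _ _ Gamma_unit HG) as [uG [lG [HoG [HlG [HsG [HEG HqG]]]]]].
  set (r := concat dA (fun m => t * lG m) (fun m => (1 - t) * lF m)).
  set (psi := concat dA uG uF).
  assert (Hr : forall a, (a < dA + dA)%nat -> 0 <= r a).
  { intros a Ha. unfold r, concat. destruct (Nat.ltb_spec a dA);
      apply Rmult_le_pos; try lra; [apply HlG | apply HlF]; lia. }
  assert (Hsigma : forall v, quad dA (dA + dA) r psi v =
                             t * rdm_quad dA dB (lincomb alpha beta Psi Phi) v + (1 - t) * rdm_quad dA dB Phi v).
  { intros v. unfold r, psi. rewrite quad_concat, HqG, HqF. unfold quad.
    rewrite <- !Rsum_scal_l. f_equal; apply Rsum_ext; intros; ring. }
  destruct (spectral dA (dA + dA) r psi Hr) as [M [e [lam [Ho [Hl Hdiag]]]]].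
  assert (Hupper : Rsum M (fun m => eta (lam m)) <= t * EGamma + (1 - t) * EPhi + h2 t).
  { eapply Rle_trans; [apply (entropy_le_weights dA (dA + dA) r psi M e lam); auto |].
    - intros a Ha. unfold psi, concat. destruct (Nat.ltb_spec a dA);
        [apply (on_unit dA dA uG HoG) | apply (on_unit dA dA uF HoF)]; lia.
    - right. unfold r. rewrite (Rsum_concat dA dA eta).
      rewrite !eta_scaled_sum by (auto; lra). rewrite HEG, HEF. unfold h2, eta. ring. }
  assert (Hlower : qcoef t alpha beta * EPsi <= Rsum M (fun m => eta (lam m))).
  { rewrite HEP. pose proof denom_pos. pose proof qcoef_range.
    apply (entropy_ge_component dA M dA e uP lam lP (qcoef t alpha beta)
             (fun v => / denom t beta * rdm_quad dA dB (rest_vec t alpha beta Psi Phi) v)); auto.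
    - intros v. apply Rmult_le_pos; [left; apply Rinv_0_lt_compat; auto |].
      apply quad_nonneg; intros; lra.
    - rewrite <- rest_trace, Rsum_scal_l. apply Rmult_le_compat_l; [left; apply Rinv_0_lt_compat; auto |].
      apply rdm_trace_bessel, Ho.
    - intros v. rewrite <- Hdiag, Hsigma, mixture_split, HqP. reflexivity. }
  lra.
Qed.

End Superposition.

Lemma lincomb_sym a b x y : lincomb b a y x = lincomb a b x y.
Proof.
  apply functional_extensionality; intro i; apply functional_extensionality; intro j.
  unfold lincomb. apply Ceq; unfold Cadd; simpl; ring.
Qed.

(** One of the two bounds; the other follows by exchanging the roles of Psi and Phi. *)
Lemma lower_bound_L2 dA dB Psi Phi alpha beta t EPsi EPhi EGamma :
  is_unit_vec dA dB Psi -> is_unit_vec dA dB Phi -> is_unit_vec dA dB (lincomb alpha beta Psi Phi) ->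
  Ent dA dB Psi EPsi -> Ent dA dB Phi EPhi -> Ent dA dB (lincomb alpha beta Psi Phi) EGamma ->
  0 < t < 1 ->
  EGamma >= (1 - t) * Cnorm2 alpha / (1 - t * (1 - Cnorm2 beta)) * EPsi
            - (1 - t) / t * EPhi - 1 / t * h2 t.
Proof.
  intros HuP HuF HuG HP HF HG Ht.
  pose proof (key_inequality dA dB Psi Phi alpha beta t HuP HuF HuG Ht EPsi EPhi EGamma HP HF HG) as Hk.
  pose proof (denom_pos beta t Ht) as HD. unfold qcoef, denom in *.
  apply Rle_ge. apply (Rmult_le_reg_l t); [lra |].
  replace (t * ((1 - t) * Cnorm2 alpha / (1 - t * (1 - Cnorm2 beta)) * EPsi - (1 - t) / t * EPhi - 1 / t * h2 t))
    with (t * (1 - t) * Cnorm2 alpha / (1 - t * (1 - Cnorm2 beta)) * EPsi - (1 - t) * EPhi - h2 t)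
    by (field; lra).
  lra.
Qed.

Theorem theorem4 (dA dB : nat) (Psi Phi : bivec) (alpha beta : Cpx) (t : R)
  (EPsi EPhi EGamma : R) :
  is_unit_vec dA dB Psi ->
  is_unit_vec dA dB Phi ->
  is_unit_vec dA dB (lincomb alpha beta Psi Phi) ->
  Ent dA dB Psi EPsi ->
  Ent dA dB Phi EPhi ->
  Ent dA dB (lincomb alpha beta Psi Phi) EGamma ->
  0 < t < 1 ->
  EGamma >=
  Rmax
    ((1 - t) * Cnorm2 beta / (1 - t * (1 - Cnorm2 alpha)) * EPhi
       - (1 - t) / t * EPsi - 1 / t * h2 t)
    ((1 - t) * Cnorm2 alpha / (1 - t * (1 - Cnorm2 beta)) * EPsi
       - (1 - t) / t * EPhi - 1 / t * h2 t).
Proof.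
  intros HuP HuF HuG HP HF HG Ht.
  pose proof (lower_bound_L2 dA dB Psi Phi alpha beta t EPsi EPhi EGamma HuP HuF HuG HP HF HG Ht) as L2.
  rewrite <- lincomb_sym in HuG, HG.
  pose proof (lower_bound_L2 dA dB Phi Psi beta alpha t EPhi EPsi EGamma HuF HuP HuG HF HP HG Ht) as L1.
  unfold Rmax; destruct (Rle_dec _ _); auto.
Qed.
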